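(* Let $\mathcal{A}\subset\mathcal{B}\subset\mathcal{N}$ with $\mathcal{A}$ a $\gamma$-ensemble ($|\mathcal{A}|/N\ge\gamma$), and let $\Theta$ be a solution of the Kuramoto model with $D(\Theta_\mathcal{A}(t_0))<2\pi$. Then $$\left.\frac{d}{dt}\right|^+_{t=t_0}D(\Theta_\mathcal{A})\le D(\Omega_\mathcal{B})-2\kappa\sin\frac{D(\Theta_\mathcal{A}(t_0))}{2}\left(\gamma\cos\frac{D(\Theta_\mathcal{A}(t_0))}{2}-(1-\gamma)\right),$$ where $\frac{d}{dt}\big|^+$ is the upper Dini derivative.
   Context: Kuramoto model: for $N\ge2$, $\Omega=(\nu_1,\dots,\nu_N)\in\mathbb{R}^N$, $\kappa\ge0$, $\Theta(t)\in\mathbb{R}^N$ solves $\dot\theta_i=\nu_i+\frac{\kappa}{N}\sum_j\sin(\theta_j-\theta_i)$. $\mathcal{N}=\{1,\dots,N\}$; for $\mathcal{A}\subset\mathcal{N}$, $D(\Theta_\mathcal{A})=\max_{i,j\in\mathcal{A}}|\theta_i-\theta_j|$, $D(\Omega_\mathcal{A})=\max_{i,j\in\mathcal{A}}|\nu_i-\nu_j|$; $\gamma\in(1/2,1]$. *)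

From HB Require Import structures.
From mathcomp Require Import all_boot all_order all_algebra.
From mathcomp Require Import all_classical all_reals all_analysis.
Set Implicit Arguments. Unset Strict Implicit. Unset Printing Implicit Defensive.
Import Order.TTheory GRing.Theory Num.Theory.
Import numFieldNormedType.Exports.
Local Open Scope classical_set_scope.
Local Open Scope ring_scope.

Definition diam (R : realType) (N : nat) (A : {set 'I_N}) (x : 'I_N -> R) : R :=
  \big[Num.max/0]_(i in A) \big[Num.max/0]_(j in A) `|x i - x j|.

Definition kuramoto_rhs (R : realType) (N : nat) (nu : 'I_N -> R) (kappa : R)
  (th : 'I_N -> R) (i : 'I_N) : R :=
  nu i + kappa / N%:R * \sum_(j < N) sin (th j - th i).

Definition kuramoto_solution (R : realType) (N : nat) (nu : 'I_N -> R) (kappa : R)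
  (Theta : R -> 'I_N -> R) : Prop :=
  forall (i : 'I_N) (t : R),
    is_derive t (1 : R) (fun s => Theta s i) (kuramoto_rhs nu kappa (Theta t) i).

Definition upper_dini (R : realType) (f : R -> R) (t0 : R) : \bar R :=
  limf_esup (fun h : R => ((f (t0 + h) - f t0) / h)%:E) (0%R)^'+.

From HB Require Import structures.
From mathcomp Require Import all_boot all_order all_algebra.
From mathcomp Require Import all_classical all_reals all_analysis.
From mathcomp Require Import lra ring.
Set Implicit Arguments. Unset Strict Implicit. Unset Printing Implicit Defensive.
Import Order.TTheory GRing.Theory Num.Theory.
Import numFieldNormedType.Exports.
Local Open Scope classical_set_scope.
Local Open Scope ring_scope.

(* The diameter D(Theta_A(t)) is the maximum of the finitely many smooth
   functions t |-> theta_i(t) - theta_j(t), (i, j) in A x A.  The first part of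
   the file proves a Danskin-type bound for the upper right Dini derivative of
   such a maximum: it is at most any constant c that bounds the derivatives of
   the pairs that are active (attain the maximum) at t0.  Inactive pairs stay
   strictly below the maximum for small h > 0, and active pairs grow at most at
   rate c + e.

   The second part bounds the derivative of an extremal pair theta_i - theta_j
   with theta_i - theta_j = D: writing the difference of the coupling terms with
   the identity sin(m - d) - sin(m + d) = -2 cos m sin d (d = D/2), every
   oscillator contributes at most 2 sin d, and oscillators of A, whose centred
   phase m lies in [-d, d], contribute at most -2 sin d cos d.  Since A carries
   a fraction at least gamma of the population, this gives the estimate, and
   the theorem follows by combining both parts. *)

Lemma near_dnbhs_right (R : realType) (Q : R -> Prop) :
  (\forall h \near (0 : R)^', Q h) -> \forall h \near (0 : R)^'+, Q h.
Proof.
rewrite /prop_near1 /dnbhs /at_right /within /= => Qnear.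
apply: (@filterS _ (nbhs (0 : R)) _ (fun x => x != 0 -> Q x)) Qnear.
by move=> x Qx x0; apply: Qx; rewrite gt_eqF.
Qed.

Lemma difference_quotient_cvg (R : realType) (g : R -> R) (t0 dg : R) :
  is_derive t0 1 g dg ->
  (fun h => h^-1 * (g (t0 + h) - g t0)) @ (0 : R)^' --> dg.
Proof.
move=> [gder <-]; apply: cvg_trans gder; apply: near_eq_cvg; near=> h.
by rewrite /= [h%:A]mulr1 (addrC h).
Unshelve. all: by end_near. Qed.

Lemma upper_dini_le (R : realType) (F : R -> R) (t0 c : R) :
  (\forall h \near (0 : R)^'+, (F (t0 + h) - F t0) / h <= c) ->
  (upper_dini F t0 <= c%:E)%E.
Proof.
move=> Fq; rewrite /upper_dini limf_esupE.
set V := [set h | (F (t0 + h) - F t0) / h <= c].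
apply: le_trans (ereal_inf_lbound _) _.
  by exists V.
by apply: ge_ereal_sup => _ [h Vh <-]; rewrite lee_fin.
Qed.

Lemma eventually_below_line_active (R : realType) (g : R -> R) (t0 dg c : R) :
  is_derive t0 1 g dg -> dg < c ->
  \forall h \near (0 : R)^'+, g (t0 + h) <= g t0 + h * c.
Proof.
move=> gder dgc.
have quot_lt : \forall h \near (0 : R)^', h^-1 * (g (t0 + h) - g t0) < c.
  exact: cvgr_lt _ (difference_quotient_cvg gder) _ dgc.
near=> h.
have h0 : 0 < h by near: h; exact: nbhs_right_gt.
have : h^-1 * (g (t0 + h) - g t0) < c by near: h; exact: near_dnbhs_right.
by rewrite ltr_pdivrMl // mulrC; lra.
Unshelve. all: by end_near. Qed.

Lemma eventually_below_line_inactive (R : realType) (g : R -> R)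
    (t0 dg a c : R) :
  is_derive t0 1 g dg -> g t0 < a ->
  \forall h \near (0 : R)^'+, g (t0 + h) <= a + h * c.
Proof.
move=> gder ga.
have incr_cvg : (fun h => h * (h^-1 * (g (t0 + h) - g t0) - c)) @ (0 : R)^'
    --> 0 * (dg - c).
  apply: cvgM; first exact: cvg_within.
  by apply: cvgB; [exact: difference_quotient_cvg | exact: cvg_cst].
have incr_lt : \forall h \near (0 : R)^',
    h * (h^-1 * (g (t0 + h) - g t0) - c) < a - g t0.
  by apply: cvgr_lt _ incr_cvg _ _; rewrite mul0r subr_gt0.
near=> h.
have h0 : 0 < h by near: h; exact: nbhs_right_gt.
have : h * (h^-1 * (g (t0 + h) - g t0) - c) < a - g t0.
  by near: h; exact: near_dnbhs_right.
by rewrite mulrBr mulrA mulfV ?gt_eqF // mul1r; lra.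
Unshelve. all: by end_near. Qed.

Lemma upper_dini_max_le (R : realType) (I : finType) (P : pred I)
    (g : I -> R -> R) (dg : I -> R) (F : R -> R) (t0 c : R) :
  (forall i, P i -> is_derive t0 1 (g i) (dg i)) ->
  (forall i, P i -> g i t0 <= F t0) ->
  (forall i, P i -> g i t0 = F t0 -> dg i <= c) ->
  (forall t b, (forall i, P i -> g i t <= b) -> F t <= b) ->
  (upper_dini F t0 <= c%:E)%E.
Proof.
move=> gder g_le active_le F_least.
apply/lee_addgt0Pr => e e0; rewrite -EFinD; apply: upper_dini_le.
have below : \forall h \near (0 : R)^'+,
    forall i, P i -> g i (t0 + h) <= F t0 + h * (c + e).
  apply: filter_forall => i; have [Pi|] := boolP (P i); last first.
    by move=> nPi; apply: nearW => h /negP.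
  have [gF|gF] := eqVneq (g i t0) (F t0).
  - have dg_lt : dg i < c + e.
      by apply: le_lt_trans (active_le i Pi gF) _; rewrite ltrDl.
    rewrite -gF.
    by apply: filterS (eventually_below_line_active (gder i Pi) dg_lt) => h gh _.
  - have gltF : g i t0 < F t0 by rewrite lt_neqAle gF g_le.
    by apply: filterS (eventually_below_line_inactive (c + e) (gder i Pi) gltF) => h gh _.
near=> h.
have h0 : 0 < h by near: h; exact: nbhs_right_gt.
have Fh : F (t0 + h) <= F t0 + h * (c + e).
  by apply: F_least; near: h; exact: below.
by rewrite ler_pdivrMr //; lra.
Unshelve. all: by end_near. Qed.

Lemma diam_ge (R : realType) (N : nat) (A : {set 'I_N}) (x : 'I_N -> R)
    (i j : 'I_N) :
  i \in A -> j \in A -> `|x i - x j| <= diam A x.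
Proof.
move=> Ai Aj; apply: le_trans (le_bigmax_cond _ _ Ai).
exact: (le_bigmax_cond _ (fun j => `|x i - x j|) Aj).
Qed.

Lemma diam_le (R : realType) (N : nat) (A : {set 'I_N}) (x : 'I_N -> R) (b : R) :
  0 <= b -> (forall i j, i \in A -> j \in A -> x i - x j <= b) ->
  diam A x <= b.
Proof.
move=> b0 x_le; apply: bigmax_le => // i Ai; apply: bigmax_le => // j Aj.
by rewrite ler_norml; have := x_le i j Ai Aj; have := x_le j i Aj Ai; lra.
Qed.

Lemma cos_le_cos_norm (R : realType) (d m : R) :
  0 <= d <= pi -> `|m| <= d -> cos d <= cos m.
Proof.
move=> /andP[d0 dpi] md.
have mI : `|m| \in `[0, pi] by rewrite in_itv /= normr_ge0 (le_trans md dpi).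
have dI : d \in `[0, pi] by rewrite in_itv /= d0 dpi.
by rewrite -[cos m]cos_norm leNgt ltr_cos // ltNge md.
Qed.

Lemma coupling_difference (R : realType) (xk xi xj : R) :
  sin (xk - xi) - sin (xk - xj)
  = - 2 * cos (xk - (xi + xj) / 2) * sin ((xi - xj) / 2).
Proof.
set m := xk - (xi + xj) / 2; set d := (xi - xj) / 2.
have -> : xk - xi = m - d by rewrite /m /d; field.
have -> : xk - xj = m + d by rewrite /m /d; field.
by rewrite sinB sinD; ring.
Qed.

(* Half the diameter of a nonempty set of phases of diameter below 2 pi lies in
   [0, pi], where sin is nonnegative and cos is decreasing. *)
Lemma half_diam_range (R : realType) (N : nat) (A : {set 'I_N})
    (th : 'I_N -> R) (i : 'I_N) :
  i \in A -> diam A th < 2 * pi -> 0 <= diam A th / 2 <= pi.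
Proof.
move=> Ai small; have := diam_ge th Ai Ai; rewrite subrr normr0 => D0.
by apply/andP; split; lra.
Qed.

Lemma extremal_pair_midpoint (R : realType) (N : nat) (A : {set 'I_N})
    (th : 'I_N -> R) (i j k : 'I_N) :
  i \in A -> j \in A -> k \in A -> th i - th j = diam A th ->
  `|th k - (th i + th j) / 2| <= diam A th / 2.
Proof.
move=> Ai Aj Ak gap; have := diam_ge th Ai Ak; have := diam_ge th Ak Aj.
by rewrite -gap !ler_norml => /andP[? ?] /andP[? ?]; apply/andP; split; lra.
Qed.

Lemma coupling_difference_le (R : realType) (N : nat) (A : {set 'I_N})
    (th : 'I_N -> R) (i j k : 'I_N) :
  i \in A -> j \in A -> th i - th j = diam A th -> diam A th < 2 * pi ->
  sin (th k - th i) - sin (th k - th j)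
  <= 2 * sin (diam A th / 2)
     - (if k \in A then 2 * sin (diam A th / 2) * (cos (diam A th / 2) + 1)
        else 0).
Proof.
move=> Ai Aj gap small; have dI := half_diam_range Ai small.
have s0 := sin_ge0_pi dI.
rewrite coupling_difference gap; set d := diam A th / 2 in dI s0 *.
set m := th k - (th i + th j) / 2; case: ifP => kA.
- have near_mid : cos d <= cos m.
    exact: cos_le_cos_norm dI (extremal_pair_midpoint Ai Aj kA gap).
  have : 0 <= (cos m - cos d) * sin d by rewrite mulr_ge0 // subr_ge0.
  lra.
- have : 0 <= (cos m + 1) * sin d.
    by rewrite mulr_ge0 //; have := cos_geN1 m; lra.
  lra.
Qed.

Lemma coupling_sum_le (R : realType) (N : nat) (A : {set 'I_N})
    (th : 'I_N -> R) (i j : 'I_N) :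
  i \in A -> j \in A -> th i - th j = diam A th -> diam A th < 2 * pi ->
  \sum_(k < N) (sin (th k - th i) - sin (th k - th j))
  <= N%:R * (2 * sin (diam A th / 2))
     - #|A|%:R * (2 * sin (diam A th / 2) * (cos (diam A th / 2) + 1)).
Proof.
move=> Ai Aj gap small.
apply: le_trans (ler_sum _ (fun k _ => coupling_difference_le k Ai Aj gap small)) _.
rewrite sumrB sumr_const card_ord -big_mkcond /= sumr_const.
by rewrite !mulr_natl.
Qed.

Lemma extremal_pair_rate_le (R : realType) (N : nat) (nu : 'I_N -> R)
    (kappa gamma : R) (A B : {set 'I_N}) (th : 'I_N -> R) (i j : 'I_N) :
  (0 < N)%N -> 0 <= kappa -> A \subset B -> gamma <= #|A|%:R / N%:R ->
  i \in A -> j \in A -> th i - th j = diam A th -> diam A th < 2 * pi ->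
  kuramoto_rhs nu kappa th i - kuramoto_rhs nu kappa th j
  <= diam B nu - 2 * kappa * sin (diam A th / 2)
                 * (gamma * cos (diam A th / 2) - (1 - gamma)).
Proof.
move=> N0 k0 AB gA Ai Aj gap small.
have s0 := sin_ge0_pi (half_diam_range Ai small).
have sum_le := coupling_sum_le Ai Aj gap small.
set s := sin _ in s0 sum_le *; set co := cos _ in sum_le *.
have nu_le : nu i - nu j <= diam B nu.
  have [Bi Bj] := (fintype.subsetP AB i Ai, fintype.subsetP AB j Aj).
  exact: le_trans (ler_norm _) (diam_ge nu Bi Bj).
have Npos : 0 < N%:R :> R by rewrite ltr0n.
have kN : 0 <= kappa / N%:R by rewrite divr_ge0 // ltW.
have coupling_le := ler_wpM2l kN sum_le.
have rescale : kappa / N%:R * (N%:R * (2 * s) - #|A|%:R * (2 * s * (co + 1)))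
    = kappa * (2 * s) - 2 * (kappa * s * (co + 1)) * (#|A|%:R / N%:R).
  by field; rewrite gt_eqF.
rewrite rescale in coupling_le.
have saving0 : 0 <= kappa * s * (co + 1).
  by rewrite !mulr_ge0 //; have := cos_geN1 (diam A th / 2); rewrite -/co; lra.
have : 0 <= kappa * s * (co + 1) * (#|A|%:R / N%:R - gamma).
  by rewrite mulr_ge0 // subr_ge0.
rewrite /kuramoto_rhs.
have -> : forall a b (u v : R), a + kappa / N%:R * u - (b + kappa / N%:R * v)
    = a - b + kappa / N%:R * (u - v) by move=> *; ring.
rewrite -sumrB; lra.
Qed.

Theorem lemma4p1 (R : realType) (N : nat) (nu : 'I_N -> R) (kappa gamma : R)
  (A B : {set 'I_N}) (Theta : R -> 'I_N -> R) (t0 : R) :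
  (2 <= N)%N ->
  0 <= kappa ->
  1 / 2 < gamma -> gamma <= 1 ->
  A \subset B ->
  gamma <= #|A|%:R / N%:R ->
  kuramoto_solution nu kappa Theta ->
  diam A (Theta t0) < 2 * pi ->
  (upper_dini (fun t => diam A (Theta t)) t0 <=
    (diam B nu
     - 2 * kappa * sin (diam A (Theta t0) / 2)
         * (gamma * cos (diam A (Theta t0) / 2) - (1 - gamma)))%:E)%E.
Proof.
move=> N2 k0 gamma_half _ AB gA sol small.
have N0 : (0 < N)%N by apply: leq_trans N2.
have [a Aa] : exists a, a \in A.
  apply/card_gt0P; rewrite lt0n; apply/eqP => A0.
  by move: gA; rewrite A0 mul0r; lra.
pose inA (p : 'I_N * 'I_N) := (p.1 \in A) && (p.2 \in A).
apply: (@upper_dini_max_le R _ inA (fun p t => Theta t p.1 - Theta t p.2)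
  (fun p => kuramoto_rhs nu kappa (Theta t0) p.1
            - kuramoto_rhs nu kappa (Theta t0) p.2)).
- by move=> p _; apply: is_deriveB; apply: sol.
- move=> [i j] /andP[Ai Aj] /=.
  exact: le_trans (ler_norm _) (diam_ge (Theta t0) Ai Aj).
- by move=> [i j] /andP[Ai Aj] /= gap; apply: extremal_pair_rate_le.
- move=> t b below; apply: diam_le.
    by have := below (a, a); rewrite /inA /= Aa subrr; apply.
  by move=> i j Ai Aj; apply: (below (i, j)); rewrite /inA /= Ai Aj.
Qed.
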